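(* Let $q$ be a prime power and $n\ge 3$. Let $\mathcal{L}$ be a set of lines of $\mathrm{AG}(n,q)$ such that for some $x$, every line spread $\mathcal{S}$ of $\mathrm{AG}(n,q)$ satisfies $|\mathcal{L}\cap\mathcal{S}|=x$. Then $\mathcal{L}$ is a Cameron-Liebler line class of $\mathrm{AG}(n,q)$ with parameter $x$.
   Context: $\mathrm{AG}(n,q)$ is $\mathrm{PG}(n,q)$ with a hyperplane $\pi_\infty$ removed; affine points are points outside $\pi_\infty$, (affine) lines are projective lines not contained in $\pi_\infty$. A line spread of $\mathrm{AG}(n,q)$ is a set of affine lines pairwise sharing no affine point and covering all affine points. With $A_n$ the incidence matrix of affine points versus affine lines, a set $\mathcal{L}$ of affine lines is a Cameron-Liebler line class of $\mathrm{AG}(n,q)$ if its characteristic vector lies in the real row space $\mathrm{Im}(A_n^T)$; its parameter is $|\mathcal{L}|(q-1)/(q^n-1)$. *)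

(* AG(n,q) modelled as the vector space F^n over a finite field F
   with q = #|F| elements: affine points are row vectors, affine lines are the sets
   {a + t d | t in F} with d <> 0. *)
From HB Require Import structures.
From mathcomp Require Import all_boot all_order all_algebra.
From mathcomp Require Import reals.
Set Implicit Arguments. Unset Strict Implicit. Unset Printing Implicit Defensive.
Import Order.TTheory GRing.Theory Num.Theory.
Local Open Scope ring_scope.

Section AffineSpace.
Variables (F : finFieldType) (n : nat).

Definition apoint := 'rV[F]_n.

Definition is_aline (l : {set 'rV[F]_n}) : bool :=
  [exists a : 'rV[F]_n, exists d : 'rV[F]_n,
     (d != 0) && (l == [set a + t *: d | t : F])].

Definition line_spread (S : {set {set 'rV[F]_n}}) : Prop :=
  (forall l, l \in S -> is_aline l) /\ trivIset S /\ cover S = [set: 'rV[F]_n].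

Definition incidence (R : realType) (p : 'rV[F]_n) (l : {set 'rV[F]_n}) : R :=
  (p \in l)%:R.
Definition charvec (R : realType) (L : {set {set 'rV[F]_n}}) (l : {set 'rV[F]_n}) : R :=
  (l \in L)%:R.

(* chi_L lies in the real row space Im(A_n^T): chi_L = A_n^T w for some real w
   indexed by affine points (coordinates indexed by the affine lines). *)
Definition CL_class (R : realType) (L : {set {set 'rV[F]_n}}) : Prop :=
  exists w : 'rV[F]_n -> R, forall l, is_aline l ->
    charvec R L l = \sum_(p : 'rV[F]_n) incidence R p l * w p.

Definition CL_parameter (R : realType) (L : {set {set 'rV[F]_n}}) : R :=
  (#|L|%:R * (#|F|%:R - 1)) / (#|F|%:R ^+ n - 1).

End AffineSpace.

(* Every parallel class is a line spread, so L contains x lines of each of the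
   q^n - 1 nonzero directions; since a line has q - 1 nonzero directions,
   |L| (q - 1) = (q^n - 1) x.
   For the Cameron-Liebler property take the weight
   w(p) = (q - 1) / (q^n - q) * (deg p - x), where deg p counts the lines of L
   through p.  Let l = a + <d> and let e be a direction not parallel to d.
   Replacing, in the parallel class of e, the q lines meeting l by the q lines of
   direction d in the plane a + <d, e> yields another spread, so these two sets of
   q lines contain equally many lines of L.  Counting the lines of L through the
   points of l direction by direction, with this switch for the directions e not
   parallel to d, gives
   (q - 1) * sum_(p in l) deg p = (q - 1) q x + (q^n - q) chi_L(l),
   i.e. sum_(p in l) w(p) = chi_L(l). *)

From HB Require Import structures.
From mathcomp Require Import all_boot all_order all_algebra.
From mathcomp Require Import reals.
Set Implicit Arguments. Unset Strict Implicit. Unset Printing Implicit Defensive.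
Import Order.TTheory GRing.Theory Num.Theory.
Local Open Scope ring_scope.

Lemma sum_mem_card (T : finType) (A : {set T}) : (\sum_p (p \in A) = #|A|)%N.
Proof. by rewrite -sum1_card [RHS]big_mkcond; apply: eq_bigr => p _; case: (p \in A). Qed.

Lemma card_setI_sum (T : finType) (A B : {set T}) :
  #|A :&: B| = (\sum_(m in B) (m \in A))%N.
Proof.
rewrite -sum_mem_card [RHS]big_mkcond; apply: eq_bigr => m _.
by rewrite inE andbC; case: (m \in B).
Qed.

Lemma sum_eq_mem (T : finType) (A : {pred T}) (c : T) :
  (\sum_(m in A) (m == c) = (c \in A))%N.
Proof.
case: (boolP (c \in A)) => cA; last first.
  by rewrite big1 // => m mA; case: eqP => // Emc; rewrite -Emc mA in cA.
by rewrite (bigD1 c) //= eqxx big1 // => m /andP [_ /negbTE ->].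
Qed.

Lemma scale_injl (F : fieldType) (V : lmodType F) (v : V) :
  v != 0 -> injective (fun t : F => t *: v).
Proof.
move=> v0 s t /eqP; rewrite -subr_eq0 -scalerBl scaler_eq0 (negbTE v0) orbF.
by rewrite subr_eq0 => /eqP.
Qed.

Section AffineLines.
Variables (F : finFieldType) (n : nat).
Local Notation V := 'rV[F]_n.
Local Notation q := #|F|.

Definition line (a d : V) : {set V} := [set a + t *: d | t : F].

Definition parallel_class (d : V) : {set {set V}} := [set line b d | b : V].

Lemma line_memP (a d p : V) : reflect (exists t, p = a + t *: d) (p \in line a d).
Proof. by apply: (iffP imsetP) => [[t _ ->]|[t ->]]; exists t. Qed.

Lemma line_base (a d : V) : a \in line a d.
Proof. by apply/line_memP; exists 0; rewrite scale0r addr0. Qed.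

Lemma line_dir_mem (a d : V) : a + d \in line a d.
Proof. by apply/line_memP; exists 1; rewrite scale1r. Qed.

Lemma eq_line_mem (a d p : V) : p \in line a d -> line p d = line a d.
Proof.
move=> /line_memP [t0 ->]; apply/setP => y; apply/line_memP/line_memP => [[s ->]|[s ->]].
  by exists (t0 + s); rewrite scalerDl addrA.
by exists (s - t0); rewrite scalerBl -addrA [t0 *: d + _]addrC subrK.
Qed.

Lemma lineZ (a d : V) (c : F) : c != 0 -> line a (c *: d) = line a d.
Proof.
move=> c0; apply/setP => y; apply/line_memP/line_memP => [[s ->]|[s ->]].
  by exists (s * c); rewrite scalerA.
by exists (s / c); rewrite scalerA mulfVK.
Qed.

Lemma line_dir_sub (a d b e : V) : line a d = line b e -> (e <= d)%MS.
Proof.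
move=> E; apply/sub_rVP.
have /line_memP [t0 Hb] : b \in line a d by rewrite E line_base.
have /line_memP [t1 He] : b + e \in line a d by rewrite E line_dir_mem.
by exists (t1 - t0); rewrite -(addKr b e) He Hb opprD addrACA addNr add0r addrC scalerBl.
Qed.

Lemma line_span_dir (a d e : V) (t : F) :
  e != 0 -> (e <= d)%MS -> line (a + t *: d) e = line a d.
Proof.
move=> e0 /sub_rVP [c Ec].
have c0 : c != 0 by apply: contraNneq e0 => c0; rewrite Ec c0 scale0r.
by rewrite Ec lineZ // (@eq_line_mem a d) //; apply/line_memP; exists t.
Qed.

Lemma card_line (a d : V) : d != 0 -> #|line a d| = q.
Proof. by move=> d0; rewrite card_imset // => s t /addrI /(scale_injl d0). Qed.

Lemma is_aline_line (a d : V) : d != 0 -> is_aline (line a d).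
Proof. by move=> d0; apply/existsP; exists a; apply/existsP; exists d; rewrite d0 eqxx. Qed.

Lemma is_alineP (l : {set V}) : is_aline l -> exists a d, d != 0 /\ l = line a d.
Proof. by move=> /existsP [a /existsP [d /andP [d0 /eqP ->]]]; exists a, d. Qed.

Lemma line_parallel_class (p d : V) : line p d \in parallel_class d.
Proof. exact: imset_f. Qed.

Lemma parallel_class_mem (d p : V) m :
  m \in parallel_class d -> p \in m -> m = line p d.
Proof. by move=> /imsetP [b _ ->] /eq_line_mem ->. Qed.

Lemma parallel_class_sub (d e : V) m :
  m \in parallel_class d -> m \in parallel_class e -> (e <= d)%MS.
Proof. by move=> /imsetP [a _ ->] /imsetP [b _]; apply: line_dir_sub. Qed.

Lemma line_spread_intro (S : {set {set V}}) :
  {in S, forall l, is_aline l} ->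
  (forall p, exists2 l, l \in S & p \in l) ->
  (forall p : V, {in S &, forall l l' : {set V}, p \in l -> p \in l' -> l = l'}) ->
  line_spread S.
Proof.
move=> Sl Scover Suniq; split; [exact: Sl|split].
  apply/trivIsetP => A B SA SB; apply: contraNT; rewrite -setI_eq0.
  by case/set0Pn => p /setIP [pA pB]; rewrite (Suniq p A B).
by apply/setP => p; rewrite inE; apply/bigcupP; apply: Scover.
Qed.

Lemma line_spread_parallel_class (d : V) : d != 0 -> line_spread (parallel_class d).
Proof.
move=> d0; apply: line_spread_intro.
- by move=> l /imsetP [b _ ->]; apply: is_aline_line.
- by move=> p; exists (line p d); [apply: line_parallel_class | apply: line_base].
- move=> p l l' Sl Sl' pl pl'.
  by rewrite (parallel_class_mem Sl pl) (parallel_class_mem Sl' pl').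
Qed.

Definition parallels_on (a d e : V) : {set {set V}} := [set line (a + t *: d) e | t : F].

Lemma parallels_on_inj (a d e : V) :
  ~~ (d <= e)%MS -> injective (fun t : F => line (a + t *: d) e).
Proof.
move=> nde t t' E; apply/eqP; rewrite -subr_eq0; apply: contraNT nde => tt'.
have /line_memP [s] : a + t *: d \in line (a + t' *: d) e by rewrite -E line_base.
rewrite -addrA => /addrI /eqP; rewrite addrC -subr_eq -scalerBl => /eqP Ed.
by apply/sub_rVP; exists ((t - t')^-1 * s); rewrite -scalerA -Ed scalerA mulVf ?scale1r.
Qed.

Lemma parallels_on_mem (a d e p : V) (s : F) :
  p \in line (a + s *: e) d -> line p e \in parallels_on a d e.
Proof.
case/line_memP => t ->; apply/imsetP; exists t => //; apply: eq_line_mem.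
by apply/line_memP; exists s; rewrite addrAC.
Qed.

Lemma parallels_on_sub (a d e : V) : parallels_on a d e \subset parallel_class e.
Proof. by apply/subsetP => l /imsetP [t _ ->]; apply: line_parallel_class. Qed.

Section Switching.
Variables (a d e : V).
Hypotheses (d0 : d != 0) (nde : ~~ (e <= d)%MS).

Let e0 : e != 0.
Proof. by apply: contraNneq nde => ->; apply: sub0mx. Qed.

Let ned : ~~ (d <= e)%MS.
Proof.
apply: contra nde => /sub_rVP [c Ec].
have c0 : c != 0 by apply: contraNneq d0 => c0; rewrite Ec c0 scale0r.
by apply/sub_rVP; exists c^-1; rewrite Ec scalerA mulVf ?scale1r.
Qed.

Definition switched_spread : {set {set V}} :=
  (parallel_class e :\: parallels_on a d e) :|: parallels_on a e d.

Lemma line_spread_switched : line_spread switched_spread.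
Proof.
have Dd := subsetP (parallels_on_sub a e d).
have mixed p l l' : l \in parallel_class e :\: parallels_on a d e ->
    l' \in parallels_on a e d -> p \in l -> p \in l' -> False.
  case/setDP => le lP /imsetP [s _ ->] pl /parallels_on_mem.
  by rewrite -(parallel_class_mem le pl) (negbTE lP).
apply: line_spread_intro.
- move=> l /setUP [/setDP [/imsetP [b _ ->] _]|/imsetP [s _ ->]];
    exact: is_aline_line.
- move=> p; case: (boolP (line p e \in parallels_on a d e)) => [|lP].
    case/imsetP => t _ Ept.
    have /line_memP [s ->] : p \in line (a + t *: d) e by rewrite -Ept line_base.
    exists (line (a + s *: e) d); first by apply/setUP; right; apply: imset_f.
    by apply/line_memP; exists t; rewrite addrAC.
  exists (line p e); last exact: line_base.
  by apply/setUP; left; apply/setDP; split => //; apply: line_parallel_class.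
- move=> p l l' /setUP [lE|lD] /setUP [l'E|l'D] pl pl'.
  + case/setDP: lE => lE _; case/setDP: l'E => l'E _.
    by rewrite (parallel_class_mem lE pl) (parallel_class_mem l'E pl').
  + by case: (mixed p l l').
  + by case: (mixed p l' l).
  + by rewrite (parallel_class_mem (Dd _ lD) pl) (parallel_class_mem (Dd _ l'D) pl').
Qed.

Lemma card_switched_lines (L : {set {set V}}) (x : nat) :
  (forall S, line_spread S -> #|L :&: S| = x) ->
  #|L :&: parallels_on a d e| = #|L :&: parallels_on a e d|.
Proof.
move=> HS.
have disj : L :&: (parallel_class e :\: parallels_on a d e) :&: (L :&: parallels_on a e d)
    = set0.
  apply/setP => l; rewrite !inE; apply/negP => /and3P [/and3P [_ _ le] _].
  move/(subsetP (parallels_on_sub _ _ _)) => ld.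
  by move/negP: nde; apply; apply: parallel_class_sub ld le.
have := cardsID (parallels_on a d e) (L :&: parallel_class e).
rewrite -setIA (setIidPr (parallels_on_sub _ _ _)) -setIDA.
rewrite (HS _ (line_spread_parallel_class e0)).
have := HS _ line_spread_switched; rewrite setIUr cardsU disj cards0 subn0.
by move=> <- /eqP; rewrite addnC eqn_add2l => /eqP.
Qed.

Lemma switched_sum (L : {set {set V}}) (x : nat) :
  (forall S, line_spread S -> #|L :&: S| = x) ->
  (\sum_(t : F) (line (a + t *: d) e \in L))%N = (\sum_(s : F) (line (a + s *: e) d \in L))%N.
Proof.
move=> HS; have := card_switched_lines HS.
rewrite !card_setI_sum !big_imset //=; apply: in2W.
  exact: parallels_on_inj nde.
exact: parallels_on_inj ned.
Qed.

End Switching.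

Lemma card_span (d : V) : d != 0 -> #|[set v : V | (v <= d)%MS]| = q.
Proof.
move=> d0; have -> : [set v : V | (v <= d)%MS] = [set t *: d | t : F].
  by apply/setP => v; rewrite inE; apply/sub_rVP/imsetP => [[t ->]|[t _ ->]]; exists t.
by rewrite card_imset //; apply: scale_injl.
Qed.

Lemma card_span_nonzero (d : V) :
  d != 0 -> #|[set e : V | (e != 0) && (e <= d)%MS]| = q.-1.
Proof.
move=> d0; rewrite -(card_span d0) (cardsD1 0 [set v : V | (v <= d)%MS]).
rewrite [0 \in _]inE sub0mx add1n /=.
by apply: eq_card => e; rewrite !inE.
Qed.

Lemma card_nonspan (d : V) : d != 0 -> #|[set v : V | ~~ (v <= d)%MS]| = (q ^ n - q)%N.
Proof.
move=> d0; have := cardsC [set v : V | (v <= d)%MS].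
rewrite card_span // card_mx mul1n => <-; rewrite addKn.
by apply: eq_card => v; rewrite !inE.
Qed.

(* The term s = 0 gives f 0 for every e, and each s <> 0 permutes the vectors
   outside the span of d. *)
Lemma sum_nonspan_scale (d : V) (f : V -> nat) :
  (\sum_(e | ~~ (e <= d)%MS) \sum_(s : F) f (s *: e) =
   #|[set e : V | ~~ (e <= d)%MS]| * f 0%R + q.-1 * \sum_(v | ~~ (v <= d)%MS) f v)%N.
Proof.
rewrite exchange_big /= (bigD1 (0 : F)) //=.
rewrite (eq_bigr (fun=> f 0%R)) => [|e _]; last by rewrite scale0r.
rewrite sum_nat_cond_const; congr (_ + _).
rewrite (eq_bigr (fun=> \sum_(v | ~~ (v <= d)%MS) f v)%N) => [|s s0]; last first.
  rewrite [RHS](reindex_inj (scalerI s0)) /=; apply: eq_bigl => v.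
  by rewrite (eqmx_scale _ s0).
rewrite sum_nat_cond_const -(cardsC1 (0 : F)); congr (_ * _).
by apply: eq_card => s; rewrite !inE.
Qed.

Definition directions (m : {set V}) : {set V} :=
  [set e | (e != 0) && (m \in parallel_class e)].

Lemma directions_line (a d : V) :
  directions (line a d) = [set e | (e != 0) && (e <= d)%MS].
Proof.
apply/setP => e; rewrite !inE; case: (eqVneq e 0) => //= e0.
apply/imsetP/idP => [[b _ /line_dir_sub] //|ed]; exists a => //.
by rewrite -(line_span_dir a 0 e0 ed) scale0r addr0.
Qed.

Lemma card_directions (m : {set V}) : is_aline m -> #|directions m| = q.-1.
Proof. by case/is_alineP => a [d [d0 ->]]; rewrite directions_line card_span_nonzero. Qed.

Section SpreadConstant.
Variables (L : {set {set V}}) (x : nat).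
Hypothesis HL : forall l, l \in L -> is_aline l.
Hypothesis HS : forall S, line_spread S -> #|L :&: S| = x.

Lemma card_lines_mul : (#|L| * q.-1 = (q ^ n).-1 * x)%N.
Proof.
have dirs_count m : m \in L -> (\sum_(e in [set~ 0%R]) (m \in parallel_class e) = q.-1)%N.
  move=> mL; rewrite -(card_directions (HL mL)) -sum_mem_card big_mkcond /=.
  by apply: eq_bigr => e _; rewrite !inE; case: (e != 0).
transitivity (\sum_(m in L) \sum_(e in [set~ 0%R]) (m \in parallel_class e))%N.
  by rewrite (eq_bigr _ dirs_count) sum_nat_const.
rewrite exchange_big /= -(eq_bigr _ (fun e _ => card_setI_sum _ _)).
rewrite (eq_bigr (fun=> x)) => [|e]; last first.
  by rewrite !inE setIC => e0; exact: HS (line_spread_parallel_class e0).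
by rewrite sum_nat_const cardsC1 card_mx mul1n.
Qed.

Definition degree (p : V) : nat := \sum_(m in L) (p \in m).

Lemma degree_mul (p : V) : (degree p * q.-1 = \sum_(e : V | e != 0%R) (line p e \in L))%N.
Proof.
under [RHS]eq_bigr do rewrite -sum_eq_mem.
rewrite exchange_big big_distrl /=; apply: eq_big => // m mL.
case: (boolP (p \in m)) => pm /=; last first.
  by rewrite mul0n big1 // => e _; case: eqP pm => // ->; rewrite line_base.
rewrite mul1n -(card_directions (HL mL)) -sum_mem_card [RHS]big_mkcond /=.
apply: eq_bigr => e _; rewrite inE; case: (e != 0) => //=; congr nat_of_bool.
by apply/idP/eqP => [me|->]; [exact: parallel_class_mem me pm | exact: line_parallel_class].
Qed.

Lemma sum_lines_parallel (d : V) : d != 0 -> (\sum_p (line p d \in L) = q * x)%N.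
Proof.
move=> d0; transitivity (\sum_p \sum_(m in L :&: parallel_class d) (p \in m))%N.
  apply: eq_bigr => p _.
  have -> : line p d \in L = (line p d \in L :&: parallel_class d).
    by rewrite inE line_parallel_class andbT.
  rewrite -sum_eq_mem; apply: eq_bigr => m /setIP [_ md]; congr nat_of_bool.
  by apply/eqP/idP => [->|/(parallel_class_mem md) //]; apply: line_base.
rewrite exchange_big /= (eq_bigr (fun=> q)); last first.
  by move=> m /setIP [_ /imsetP [b _ ->]]; rewrite sum_mem_card card_line.
by rewrite sum_nat_const (HS (line_spread_parallel_class d0)) mulnC.
Qed.

Section OnALine.
Variables (a d : V).
Hypothesis d0 : d != 0.
Let chi : nat := line a d \in L.

Lemma sum_lines_off_line :
  (q * chi + \sum_(v | ~~ (v <= d)%MS) (line (a + v) d \in L) = q * x)%N.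
Proof.
rewrite -(sum_lines_parallel d0) [RHS](reindex_inj (addrI a)) /=.
rewrite [RHS](bigID (fun v => (v <= d)%MS)) /=; congr (_ + _).
rewrite (eq_bigr (fun=> chi)) ?sum_nat_cond_const ?card_span // => v /sub_rVP [t ->].
by rewrite line_span_dir ?submx_refl.
Qed.

Lemma sum_degree_line :
  ((\sum_(t : F) degree (a + t *: d)) * q.-1 = q.-1 * (q * x) + (q ^ n - q) * chi)%N.
Proof.
rewrite big_distrl /=; under eq_bigr do rewrite degree_mul.
rewrite exchange_big /= (bigID (fun e => (e <= d)%MS)) /=.
rewrite (eq_bigr (fun=> q * chi)%N) => [|e /andP [e0 ed]]; last first.
  by rewrite (eq_bigr (fun=> chi)) ?sum_nat_const // => t _; rewrite line_span_dir.
rewrite sum_nat_cond_const card_span_nonzero //.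
rewrite (eq_bigl (fun e => ~~ (e <= d)%MS)) => [|e]; last first.
  by case: (eqVneq e 0) => [->|//]; rewrite sub0mx.
rewrite (eq_bigr (fun e => \sum_(s : F) (line (a + s *: e) d \in L))%N); last first.
  by move=> e nde; rewrite -(switched_sum a d0 nde HS).
rewrite (sum_nonspan_scale d (fun v => line (a + v) d \in L)) addr0 card_nonspan //.
by rewrite -sum_lines_off_line mulnDr addnA addnAC.
Qed.

End OnALine.
End SpreadConstant.
End AffineLines.

Lemma sum_incidence_line (F : finFieldType) (n : nat) (R : realType) (a d : 'rV[F]_n)
    (g : 'rV[F]_n -> R) :
  d != 0 -> \sum_p incidence R p (line a d) * g p = \sum_(t : F) g (a + t *: d).
Proof.
move=> d0; transitivity (\sum_(p in line a d) g p).
  rewrite [RHS]big_mkcond; apply: eq_bigr => p _ /=.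
  by rewrite /incidence; case: (p \in _); rewrite ?mul1r ?mul0r.
by rewrite big_imset //= => s t _ _ /addrI /(scale_injl d0).
Qed.

Section RealWeights.
Variables (F : finFieldType) (n : nat) (R : realType).
Variables (L : {set {set 'rV[F]_n}}) (x : nat).
Hypothesis HL : forall l, l \in L -> is_aline l.
Hypothesis HS : forall S, line_spread S -> #|L :&: S| = x.
Local Notation q := #|F|.

Let q_gt1 : (1 < q)%N := card_finNzRing_gt1 F.

Let natr_pred (k : nat) : (0 < k)%N -> k.-1%:R = k%:R - 1 :> R.
Proof. by move=> k0; rewrite -subn1 natrB. Qed.

Lemma CL_parameter_spread_constant : (0 < n)%N -> CL_parameter R L = x%:R.
Proof.
move=> n0; have qn1 : (1 < q ^ n)%N by rewrite -(expn0 q) ltn_exp2l.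
have qn0 : (q%:R ^+ n - 1 : R) != 0.
  by rewrite -natrX subr_eq0 pnatr_eq1 neq_ltn qn1 orbT.
have := congr1 (fun k : nat => k%:R : R) (card_lines_mul HL HS).
rewrite /CL_parameter /= !natrM !natr_pred ?(ltnW qn1) ?(ltnW q_gt1) // natrX => ->.
by rewrite mulrC mulKf.
Qed.

Lemma CL_class_spread_constant : (1 < n)%N -> CL_class R L.
Proof.
move=> n1; have K0 : (q ^ n - q)%:R != 0 :> R.
  by rewrite pnatr_eq0 subn_eq0 -ltnNge -{1}(expn1 q) ltn_exp2l.
exists (fun p => q.-1%:R / (q ^ n - q)%:R * ((degree L p)%:R - x%:R)).
move=> l /is_alineP [a [d [d0 ->]]].
have := congr1 (fun k : nat => k%:R : R) (sum_degree_line HL HS a d0).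
rewrite /charvec sum_incidence_line // -mulr_sumr sumrB sumr_const /= !natrD !natrM natr_sum.
set S := \sum_i _; set P := q.-1%:R; set K := (q ^ n - q)%:R.
set C := (line a d \in L)%:R; set Q := q%:R * x%:R => E.
rewrite -[x%:R *+ _]mulr_natl -/Q.
rewrite mulrAC mulrBr [P * S]mulrC E.
by rewrite addrAC subrr add0r [K * C]mulrC mulfK.
Qed.

End RealWeights.

Theorem theorem5p1 (F : finFieldType) (n : nat) (R : realType)
    (L : {set {set 'rV[F]_n}}) (x : nat) :
  (3 <= n)%N ->
  (forall l, l \in L -> is_aline l) ->
  (forall S : {set {set 'rV[F]_n}}, line_spread S -> #|L :&: S| = x) ->
  CL_class R L /\ CL_parameter R L = x%:R.
Proof.
move=> n3 HL HS; split.
  by apply: CL_class_spread_constant HL HS _; apply: leq_trans n3.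
by apply: CL_parameter_spread_constant HL HS _; apply: leq_trans n3.
Qed.
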